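(* Let $\Omega\subset\mathbb{C}^n$ be a Reinhardt domain and let $A$ be a Banach space of holomorphic functions on $\Omega$ such that for each $z\in\Omega$ the evaluation functional $f\mapsto f(z)$ is continuous on $A$. Then for every $m>0$ the series $$\sum_{\alpha\in\mathbb{Z}^n,\ e_\alpha\in A}\frac{e_\alpha}{\|e_\alpha\|_A^m}$$ converges locally normally on $\Omega^{(m)}$.
   Context: $\Omega$ Reinhardt means invariant under $z\mapsto(e^{i\theta_1}z_1,\dots,e^{i\theta_n}z_n)$ for all $\theta\in\mathbb{R}^n$. $e_\alpha(z)=z_1^{\alpha_1}\cdots z_n^{\alpha_n}$. The $m$-th Reinhardt power of $\Omega$ is $\Omega^{(m)}=\{z\in\mathbb{C}^n:(|z_1|^{1/m},\dots,|z_n|^{1/m})\in\Omega\}$. A series of functions $\sum_\alpha h_\alpha$ converges locally normally on a domain $D$ if for every compact $K\subset D$, $\sum_\alpha\sup_K|h_\alpha|<\infty$. *)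

From HB Require Import structures.
From mathcomp Require Import all_boot all_order all_algebra.
From mathcomp Require Import all_classical all_reals all_analysis.
From mathcomp Require Export complex.
Set Implicit Arguments. Unset Strict Implicit. Unset Printing Implicit Defensive.
Import Order.TTheory GRing.Theory Num.Theory.
Import numFieldTopology.Exports numFieldNormedType.Exports.
Local Open Scope classical_set_scope.
Local Open Scope ring_scope.
Local Open Scope complex_scope.

Section Defs.
Variable R : realType.
(* C is the complex field R[i], seen (via ^o) with its canonical normed/topological
   structure; C^n is 'rV[C]_n with the (sup-)norm topology. *)
Local Notation C := ((R[i])^o).

Definition emono n (alpha : 'rV[int]_n) (z : 'rV[C]_n) : C :=
  \prod_(j < n) (z ord0 j) ^ (alpha ord0 j).

Definition is_domain n (Omega : set 'rV[C]_n) : Prop :=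
  Omega !=set0 /\ open Omega /\ connected Omega.

Definition reinhardt n (Omega : set 'rV[C]_n) : Prop :=
  forall (z : 'rV[C]_n) (theta : 'rV[R]_n), Omega z ->
    Omega (\row_j ((cos (theta ord0 j) +i* sin (theta ord0 j)) * z ord0 j)).

Definition reinhardt_power n (Omega : set 'rV[C]_n) (m : R) : set 'rV[C]_n :=
  [set z : 'rV[C]_n | Omega (\row_j ((powR (complex.Re `|z ord0 j|) (m^-1))%:C))].

(* A (a Banach space over C) is a Banach space of holomorphic functions on
   Omega via iota : A -> (C^n -> C): iota is linear, injective as a map into
   functions on Omega, every iota a is holomorphic (complex-Frechet
   differentiable) on Omega, and point evaluations are continuous. *)
Definition holo_banach n (Omega : set 'rV[C]_n) (A : completeNormedModType C)
  (iota : A -> 'rV[C]_n -> C) : Prop :=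
  [/\ (forall a b z, Omega z -> iota (a + b) z = iota a z + iota b z),
      (forall (k : C) a z, Omega z -> iota (k *: a) z = k * iota a z),
      (forall a b, (forall z, Omega z -> iota a z = iota b z) -> a = b),
      (forall a z, Omega z -> differentiable (iota a : 'rV[C]_n -> C) z) &
      (forall z, Omega z -> continuous (fun a => iota a z))].

Definition mono_rep n (Omega : set 'rV[C]_n) (A : completeNormedModType C)
  (iota : A -> 'rV[C]_n -> C) (alpha : 'rV[int]_n) : set A :=
  [set a | forall z, Omega z -> iota a z = emono alpha z].

(* e_alpha as an element of A (unique by injectivity of iota, when it exists) *)
Definition monoA n (Omega : set 'rV[C]_n) (A : completeNormedModType C)
  (iota : A -> 'rV[C]_n -> C) (alpha : 'rV[int]_n) : A :=
  xget 0 (mono_rep Omega iota alpha).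

End Defs.

From HB Require Import structures.
From mathcomp Require Import all_boot all_order all_algebra.
From mathcomp Require Import all_classical all_reals all_analysis.
From mathcomp Require Import complex.
From mathcomp Require Import ring lra.
Set Implicit Arguments. Unset Strict Implicit. Unset Printing Implicit Defensive.
Import Order.TTheory GRing.Theory Num.Theory.
Import numFieldTopology.Exports numFieldNormedType.Exports Normc.
Local Open Scope classical_set_scope.
Local Open Scope ring_scope.

(* Fix z0 in Omega^(m) and let w_j = |z0_j|^(1/m), a point of Omega.  As Omega
   is open, it contains the points p_sg with coordinates w_j * rho^(+-1) (or a
   small eta > 0 where w_j = 0), and continuity of the point evaluations gives
   |f(p_sg)| <= c ||f|| on A.  Choosing the signs of sg as those of alpha
   yields |e_alpha(z)| <= c^m t^|alpha| ||e_alpha||^m for z near z0 and some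
   t < 1; this uses that alpha_j >= 0 as soon as some point of Omega has a
   zero j-th coordinate, since e_alpha would otherwise blow up near it.
   Compactness makes c and t uniform on K, and \sum_alpha t^|alpha| < +oo. *)

Section RealInequalities.
Variable R : realFieldType.
Implicit Types x y P t : R.

Lemma exprz_ge_inv x (k : int) : 0 < x -> x <= 1 -> k <= -1 -> x^-1 <= x ^ k.
Proof.
move=> x0 x1; case: k => // k _; rewrite NegzE -exprnN lef_pV2 ?posrE ?exprn_gt0 //.
by rewrite exprS ler_piMr ?exprn_ile1 // ltW.
Qed.

Lemma exprz_le_scaled y P t (k : int) : 0 <= y -> 0 < P -> 0 < t ->
  (0 < k -> y <= t * P) -> (k < 0 -> P / t <= y) -> y ^ k <= P ^ k * t ^+ `|k|%N.
Proof.
move=> y0 P0 t0; case: k => [[|k]|k] hpos hneg /=; first by rewrite mulr1.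
  by rewrite -!exprnP -exprMn mulrC lerXn2r ?nnegrE ?mulr_ge0 ?(ltW t0) ?(ltW P0) ?hpos.
have yP : P / t <= y by exact: hneg.
rewrite NegzE -!exprnN /=.
have -> : P ^- k.+1 * t ^+ k.+1 = ((P / t) ^+ k.+1)^-1.
  by rewrite exprMn exprVn invfM invrK mulrC.
have Pt0 : 0 < P / t by rewrite divr_gt0.
rewrite lef_pV2 ?posrE ?exprn_gt0 ?(lt_le_trans Pt0 yP) //.
by rewrite lerXn2r ?nnegrE ?(ltW Pt0) ?(le_trans (ltW Pt0) yP).
Qed.

Lemma exists_lt1_mulr_gt1 (D : R) : 1 < D -> exists t, [/\ 0 < t, t < 1 & 1 < t * D].
Proof.
move=> D1; have D0 : 0 < D := lt_trans ltr01 D1.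
have DV1 : D^-1 < 1 by rewrite invf_lt1.
have DV0 : 0 < D^-1 by rewrite invr_gt0.
exists ((1 + D^-1) / 2).
have -> : (1 + D^-1) / 2 * D = (D + 1) / 2 by rewrite mulrAC mulrDl mulVf ?gt_eqF ?mul1r.
by split; lra.
Qed.

End RealInequalities.

Section PowR.
Variable R : realType.

Lemma powR_prod (I : finType) (f : I -> R) (m : R) :
  (forall i, 0 <= f i) -> (\prod_i f i) `^ m = \prod_i f i `^ m.
Proof.
move=> f0; suff [] : (\prod_i f i) `^ m = \prod_i f i `^ m /\ 0 <= \prod_i f i by [].
elim/big_rec2: _ => [|i y1 y2 _ [<- y0]]; first by rewrite powR1 ler01.
by split; [rewrite powRM | exact: mulr_ge0].
Qed.

Lemma powR_exprz (x m : R) (k : int) : 0 <= x -> (x ^ k) `^ m = (x `^ m) ^ k.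
Proof. by move=> x0; rewrite -powR_intmul // powRAC powR_intmul // powR_ge0. Qed.

Lemma powRV (x m : R) : 0 <= x -> x^-1 `^ m = (x `^ m)^-1.
Proof. by move=> x0; rewrite -powR_inv1 // -powRrM mulN1r powRN. Qed.

Lemma powR_gt1 (x m : R) : 0 < m -> 1 < x -> 1 < x `^ m.
Proof.
move=> m0 x1; have := gt0_ltr_powR m0 (x := 1) (y := x).
by rewrite !nnegrE ler01 powR1 (ltW (lt_trans ltr01 x1)) => /(_ isT isT x1).
Qed.

End PowR.

Definition l1norm {n} (al : 'rV[int]_n) : nat := \sum_j `|al ord0 j|%N.

Section GeometricRows.
Variables (R : realType) (n : nat) (t : R).
Hypotheses (t0 : 0 < t) (t1 : t < 1).

Lemma sum_geometric_le (N : nat) : \sum_(u < N) t ^+ u <= (1 - t)^-1.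
Proof.
have := geometric_le_lim N (@ler01 R) t0; rewrite gtr0_norm // mul1r => /(_ t1).
by rewrite seriesEord /=; under eq_bigr do rewrite /geometric /= mul1r.
Qed.

(* Each row is encoded injectively by the absolute values and signs of its
   entries, so the sum is dominated by the n-th power of \sum_(k in Z) t^|k|. *)
Lemma sum_uniq_geometric_rows (s : seq 'rV[int]_n) :
  uniq s -> \sum_(al <- s) t ^+ l1norm al <= (2 / (1 - t)) ^+ n.
Proof.
move=> s_uniq; set N := (\max_(al <- s) \max_j `|al ord0 j|)%N.
have ltN al j : al \in s -> (`|al ord0 j| < N.+1)%N.
  move=> als; rewrite ltnS; apply: leq_trans (leq_bigmax_seq al als isT).
  exact: (@leq_bigmax _ (fun j => `|al ord0 j|%N)).
pose enc (al : 'rV[int]_n) : {ffun 'I_n -> 'I_N.+1 * bool} :=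
  [ffun j => (inord `|al ord0 j|, al ord0 j < 0)].
pose F (f : {ffun 'I_n -> 'I_N.+1 * bool}) := \prod_j t ^+ (f j).1.
have F0 f : 0 <= F f by rewrite prodr_ge0 // => j _; rewrite exprn_ge0 ?ltW.
have encE al : al \in s -> t ^+ l1norm al = F (enc al).
  by move=> als; rewrite -prodrXr; apply: eq_bigr => j _; rewrite ffunE inordK ?ltN.
have enc_inj : {in s &, injective enc}.
  move=> al be als bes /ffunP eq_enc; apply/rowP => j.
  have := eq_enc j; rewrite !ffunE => -[/(congr1 val)] /=.
  rewrite !inordK ?ltN // => eq_abs eq_sgn.
  by rewrite [LHS]intEsign [RHS]intEsign eq_abs eq_sgn.
rewrite (eq_big_seq (F \o enc)) // -(big_map enc predT F) big_uniq /=; last first.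
  by rewrite map_inj_in_uniq.
apply: (@le_trans _ _ (\sum_f F f)).
  by rewrite [leRHS](bigID (mem (map enc s))) /= lerDl sumr_ge0.
rewrite /F -(bigA_distr_bigA (fun _ (x : 'I_N.+1 * bool) => t ^+ x.1)) /=.
rewrite prodr_const card_ord; apply: lerXn2r; rewrite ?nnegrE.
- by rewrite sumr_ge0 // => ? _; rewrite exprn_ge0 ?ltW.
- by rewrite divr_ge0 ?subr_ge0 ?ltW.
rewrite -(pair_bigA _ (fun (u : 'I_N.+1) _ => t ^+ u)) /=.
under eq_bigr do rewrite big_bool /=.
by have := sum_geometric_le N.+1; rewrite big_split /=; lra.
Qed.

Lemma esum_geometric_rows_lt_pinfty (S : set 'rV[int]_n) (C : R) : 0 <= C ->
  (\esum_(al in S) (C * t ^+ l1norm al)%:E < +oo)%E.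
Proof.
move=> C0; apply: (@le_lt_trans _ _ (C * (2 / (1 - t)) ^+ n)%:E); last exact: ltry.
apply: ge_ereal_sup => _ [X [finX _] <-].
rewrite fsbig_finite //= sumEFin lee_fin -mulr_sumr ler_wpM2l //.
exact/sum_uniq_geometric_rows/finmap.fset_uniq.
Qed.

End GeometricRows.

Section CompactGeometricBound.
Variables (R : realType) (T : topologicalType) (I : Type).
Variables (f : I -> T -> R) (d : I -> nat).

(* The bounds r * (1 - r^-1) ^+ d increase with r, so the local bounds are
   made uniform by a near-covering argument with r --> +oo. *)
Lemma compact_geometric_bound (K : set T) : compact K ->
  (forall x, K x -> exists C t : R, [/\ 0 <= C, 0 <= t, t < 1 &
     \forall y \near x, forall i, f i y <= C * t ^+ d i]) ->
  exists C t : R, [/\ 0 <= C, 0 < t, t < 1 &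
     forall y, K y -> forall i, f i y <= C * t ^+ d i].
Proof.
move=> /compact_near_coveringP cK loc.
pose P r y := forall i, f i y <= r * (1 - r^-1) ^+ d i.
have [r [KP r1]] : exists r, K `<=` P r /\ 1 < r.
  apply: (@filter_ex _ (+oo%R : set_system R)); near=> r; split; last first.
    by near: r; apply: nbhs_pinfty_gt; exact: num_real.
  near: r; apply: cK => x /loc [C [t [C0 t0 t1 near_x]]].
  near=> y r.
  have r0 : 0 < r by near: r; apply: nbhs_pinfty_gt; exact: num_real.
  have Cr : C <= r by near: r; apply: nbhs_pinfty_ge; exact: num_real.
  have tr : (1 - t)^-1 <= r by near: r; apply: nbhs_pinfty_ge; exact: num_real.
  have fy : forall i, f i y <= C * t ^+ d i by near: y.
  have rt : r^-1 <= 1 - t.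
    have t1' : 0 < 1 - t by rewrite subr_gt0.
    by rewrite -[leRHS]invrK lef_pV2 ?posrE ?invr_gt0.
  move=> i /=; apply: (le_trans (fy i)).
  by rewrite ler_pM ?exprn_ge0 // lerXn2r ?nnegrE //; lra.
Unshelve. all: end_near.
have r0 : 0 < r := lt_trans ltr01 r1.
exists r, (1 - r^-1); split => //; first exact: ltW.
- by rewrite subr_gt0 invf_lt1.
- by rewrite gtrBl invr_gt0.
Qed.
End CompactGeometricBound.


Section ComplexModulus.
Variable R : realType.
Local Notation C := ((R[i])^o).
Implicit Types x y : R[i].

Lemma normr_normc x : `|x| = (normc x)%:C%C.
Proof. by []. Qed.

Lemma normc_ge0 x : 0 <= normc x.
Proof. by case: x => a b; exact: sqrtr_ge0. Qed.

Lemma normcR (r : R) : normc r%:C%C = `|r|.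
Proof. by rewrite /= expr0n addr0 sqrtr_sqr. Qed.

Lemma normc_eq0 x : (normc x == 0) = (x == 0).
Proof. by rewrite -[RHS]normr_eq0 normr_normc -(inj_eq (@complexI R)). Qed.

Lemma normc_prod (I : finType) (F : I -> C) :
  normc (\prod_i F i) = \prod_i normc (F i).
Proof. exact: (big_morph _ (@normcM R) (@normc1 R)). Qed.

Lemma normc_exprz x (k : int) : normc (x ^ k) = normc x ^ k.
Proof.
have normcX m : normc (x ^+ m) = normc x ^+ m.
  by apply: (@complexI R); rewrite rmorphXn /= -!normr_normc normrX.
by case: k => k; rewrite ?NegzE -?exprnN ?normcV normcX.
Qed.

Lemma normc_dist x y : `|normc x - normc y| <= normc (x - y).
Proof.
have := le_normcD (x - y) y; have := le_normcD (y - x) x.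
rewrite !subrK -opprB normcN => hy hx.
by rewrite ler_norml; apply/andP; split; lra.
Qed.

Lemma normc_continuous : continuous (@normc R : C -> R).
Proof.
move=> x; apply/(@cvgrPdist_lt _ _ _ _ (nbhs_filter x)) => e e0.
have e0C : (0 : C) < e%:C%C by rewrite ltcR.
apply: filterS (nbhsx_ballx x _ e0C) => y; rewrite /ball /= normr_normc ltcR.
exact: le_lt_trans (normc_dist _ _).
Qed.

Lemma normc_coord_cvg n (z0 : 'rV[C]_n) j :
  normc (z ord0 j) @[z --> z0] --> normc (z0 ord0 j).
Proof.
by apply: continuous_comp; [exact: coord_continuous | exact: normc_continuous].
Qed.

Lemma near_scaled_moduli n (z0 : 'rV[C]_n) (D eta t : R) :
  0 < t -> 1 < t * D -> 0 < eta -> \forall z \near z0, forall j,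
    normc ((z : 'rV[C]_n) ord0 j) <=
      t * (if normc (z0 ord0 j) == 0 then eta else normc (z0 ord0 j) * D)
    /\ normc (z0 ord0 j) / D / t <= normc (z ord0 j).
Proof.
move=> t0 tD eta0; apply: (filter_forall (nbhs_filter z0)) => j.
have cvg_a := normc_coord_cvg (z0 := z0) (j := j).
have D0 : 0 < D by nra.
have [a0|an0] := eqVneq (normc (z0 ord0 j)) 0.
  near=> z; rewrite a0 !mul0r normc_ge0; split=> //; apply: ltW; near: z.
  by apply: (cvgr_lt _ cvg_a); rewrite a0 mulr_gt0.
have a_gt0 : 0 < normc (z0 ord0 j) by rewrite lt_def an0 normc_ge0.
near=> z; split; apply: ltW; near: z.
  by apply: (cvgr_lt _ cvg_a); rewrite mulrCA ltr_pMr.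
apply: (cvgr_gt _ cvg_a).
by rewrite -mulrA -invfM ltr_pdivrMr ?mulr_gt0 // ltr_pMr // mulrC.
Unshelve. all: end_near.
Qed.

Lemma normc_emono n (al : 'rV[int]_n) (z : 'rV[C]_n) :
  normc (emono al z) = \prod_j normc (z ord0 j) ^ al ord0 j.
Proof. by rewrite normc_prod; apply: eq_bigr => j _; rewrite normc_exprz. Qed.

Lemma nbhs_rowP n (x : 'rV[C]_n) (P : set 'rV[C]_n) : nbhs x P ->
  exists2 r : R, 0 < r &
    forall y : 'rV[C]_n, (forall j, normc (x ord0 j - y ord0 j) < r) -> P y.
Proof.
move/nbhs_ballP => [[a b] /= e0 xeP].
move: e0; rewrite ltcE /= => /andP[/eqP b0 a0]; subst b.
exists a => // y xy; apply: xeP; split=> [|i j]; first by rewrite ltcE /= eqxx.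
by rewrite (ord1 i) /ball /= normr_normc ltcR.
Qed.

End ComplexModulus.

Section ComplexNormedModule.
Variables (R : realType) (V : normedModType ((R[i])^o)).

Definition normv (v : V) : R := complex.Re `|v|.

Lemma normr_normv v : `|v| = (normv v)%:C%C.
Proof.
rewrite /normv; case: `|v| (normr_ge0 v) => a b.
by rewrite lecE /= => /andP[/eqP ->].
Qed.

Lemma normv_ge0 v : 0 <= normv v.
Proof. by have := normr_ge0 v; rewrite normr_normv lecE /= eqxx. Qed.

Lemma normv_gt0 v : (0 < normv v) = (v != 0).
Proof. by rewrite -normr_gt0 normr_normv ltcE /= eqxx. Qed.

Lemma normvZ (k : (R[i])^o) v : normv (k *: v) = normc k * normv v.
Proof. by apply: (@complexI R); rewrite rmorphM -normr_normv normrZ normr_normv. Qed.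

Lemma nbhs_normvP (x : V) (P : set V) : nbhs x P ->
  exists2 r : R, 0 < r & forall y, normv (x - y) < r -> P y.
Proof.
move/nbhs_ballP => [[a b] /= e0 xeP].
move: e0; rewrite ltcE /= => /andP[/eqP b0 a0]; subst b.
by exists a => // y xy; apply: xeP; rewrite -ball_normE /= normr_normv ltcR.
Qed.

Lemma scalable_continuous_bounded (g : V -> (R[i])^o) :
  (forall k v, g (k *: v) = k * g v) -> {for 0, continuous g} ->
  exists2 c : R, 0 < c & forall v, normc (g v) <= c * normv v.
Proof.
move=> gZ g_cont; have g0 : g 0 = 0 by have := gZ 0 0; rewrite scale0r mul0r.
have /nbhs_normvP [r r0 small] : nbhs (0 : V) [set v | normc (g v) < 1].
  apply: (g_cont [set z | normc z < 1]); rewrite g0.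
  apply: filterS (nbhsx_ballx _ 1%:C%C _) => [z|].
    by rewrite -ball_normE /= sub0r normrN normr_normc ltcR.
  by rewrite ltcR.
exists (2 / r) => [|v]; first by rewrite divr_gt0.
have [->|v0] := eqVneq v 0; first by rewrite g0 normc0 mulr_ge0 ?normv_ge0 ?divr_ge0 ?ltW.
have nv0 : 0 < normv v by rewrite normv_gt0.
pose k := r / (2 * normv v); have k0 : 0 < k by rewrite divr_gt0 ?mulr_gt0.
have : normc (g (k%:C%C *: v)) < 1.
  apply: small; rewrite sub0r -scaleNr normvZ normcN normcR gtr0_norm //.
  have -> : k * normv v = r / 2 by rewrite /k; field; rewrite gt_eqF.
  lra.
rewrite gZ normcM normcR gtr0_norm // -ltr_pdivlMl // mulr1 => /ltW /le_trans; apply.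
by rewrite /k invf_div mulrAC.
Qed.

End ComplexNormedModule.

Section Monomials.
Variables (R : realType) (n : nat).
Local Notation C := ((R[i])^o).

Lemma normc_emono_row_set (al : 'rV[int]_n) (v : 'rV[C]_n) j (x : C) :
  normc (emono al (\row_k (if k == j then x else v ord0 k))) =
  normc x ^ al ord0 j * \prod_(k | k != j) normc (v ord0 k) ^ al ord0 k.
Proof.
rewrite normc_emono (bigD1 j) //= mxE eqxx; congr (_ * _).
by apply: eq_bigr => k /negbTE kj; rewrite mxE kj.
Qed.

Lemma normc_emono_le (al : 'rV[int]_n) (z : 'rV[C]_n) (P : 'I_n -> R) (t : R) :
  0 < t -> (forall j, 0 < P j) ->
  (forall j, 0 < al ord0 j -> normc (z ord0 j) <= t * P j) ->
  (forall j, al ord0 j < 0 -> P j / t <= normc (z ord0 j)) ->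
  normc (emono al z) <= \prod_j P j ^ al ord0 j * t ^+ l1norm al.
Proof.
move=> t0 P0 zle zge; rewrite normc_emono /l1norm -prodrXr -big_split /=.
apply: ler_prod => j _; rewrite exprz_ge0 ?normc_ge0 //=.
exact: exprz_le_scaled (normc_ge0 _) (P0 j) t0 (zle j) (zge j).
Qed.

End Monomials.

Section Perturbation.
Variable R : realType.

Definition perturb (x rho eta : R) (b : bool) : R :=
  if x == 0 then eta else if b then x * rho else x / rho.

Lemma perturb_gt0 x rho eta b : 0 <= x -> 0 < rho -> 0 < eta ->
  0 < perturb x rho eta b.
Proof.
move=> x0 rho0 eta0; rewrite /perturb; case: eqP => // /eqP xn0.
have x_gt0 : 0 < x by rewrite lt_def xn0.
by case: b; [rewrite mulr_gt0 | rewrite divr_gt0].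
Qed.

Lemma perturb_powR x rho eta b m : 0 <= x -> 0 <= rho ->
  perturb x rho eta b `^ m =
  if x == 0 then eta `^ m else if b then x `^ m * rho `^ m else x `^ m / rho `^ m.
Proof.
move=> x0 rho0; rewrite /perturb; case: eqP => // _.
by case: b; rewrite powRM ?powRV ?invr_ge0.
Qed.

Lemma perturb_dist x rho eta b : 0 <= x -> 1 <= rho -> x != 0 ->
  `|x - perturb x rho eta b| <= x * (rho - 1).
Proof.
move=> x0 rho1 xn0; have rho0 : 0 < rho by apply: lt_le_trans rho1.
rewrite /perturb (negbTE xn0); case: b.
  rewrite distrC; have -> : x * rho - x = x * (rho - 1) by rewrite mulrBr mulr1.
  by rewrite ger0_norm // mulr_ge0 // subr_ge0.
have -> : x - x / rho = x * (rho - 1) / rho by field; rewrite gt_eqF.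
have xrho0 : 0 <= x * (rho - 1) by rewrite mulr_ge0 // subr_ge0.
by rewrite ger0_norm ?divr_ge0 ?(ltW rho0) // ler_pdivrMr // ler_peMr.
Qed.

Lemma normc_emono_le_perturb n (al : 'rV[int]_n) (z : 'rV[(R[i])^o]_n)
    (w : 'I_n -> R) (rho eta t m : R) :
  (forall j, 0 <= w j) -> 0 < rho -> 0 < eta -> 0 < t ->
  (forall j, al ord0 j < 0 -> w j != 0) ->
  (forall j, normc (z ord0 j) <= t * perturb (w j) rho eta true `^ m) ->
  (forall j, w j != 0 -> perturb (w j) rho eta false `^ m / t <= normc (z ord0 j)) ->
  normc (emono al z) <=
    (\prod_j perturb (w j) rho eta (0 <= al ord0 j) ^ al ord0 j) `^ m * t ^+ l1norm al.
Proof.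
move=> w0 rho0 eta0 t0 al_w z_le z_ge.
have pert_gt0 j b : 0 < perturb (w j) rho eta b by exact: perturb_gt0.
rewrite powR_prod => [|j]; last by rewrite exprz_ge0 // ltW.
rewrite (eq_bigr (fun j => (perturb (w j) rho eta (0 <= al ord0 j) `^ m) ^ al ord0 j));
  last by move=> j _; rewrite powR_exprz // ltW.
apply: normc_emono_le => // [j|j al_j|j al_j]; first exact: powR_gt0.
  by rewrite (ltW al_j).
by rewrite [0 <= _]leNgt al_j z_ge ?al_w.
Qed.

End Perturbation.

Section HolomorphicBanachSpace.
Variables (R : realType) (n : nat) (Omega : set 'rV[(R[i])^o]_n).
Variables (A : completeNormedModType ((R[i])^o)).
Variable iota : A -> 'rV[(R[i])^o]_n -> (R[i])^o.
Hypotheses (hb : holo_banach Omega iota) (open_Omega : open Omega).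
Local Notation C := ((R[i])^o).

Lemma monoA_emono al : mono_rep Omega iota al !=set0 ->
  forall z, Omega z -> iota (monoA Omega iota al) z = emono al z.
Proof. by move=> [a a_al]; apply: (xgetPex 0 (ex_intro _ a a_al)). Qed.

Lemma eval_bounded (T : finType) (p : T -> 'rV[C]_n) : (forall i, Omega (p i)) ->
  exists2 c : R, 0 < c & forall i a, normc (iota a (p i)) <= c * normv a.
Proof.
move=> Op; case: hb => _ iotaZ _ _ iota_cont.
have /fin_all_exists2 [c c0 c_bound] i : exists2 c : R, 0 < c &
    forall a, normc (iota a (p i)) <= c * normv a.
  by apply: scalable_continuous_bounded => [k a|]; [exact: iotaZ | exact: iota_cont].
exists (1 + \sum_i c i) => [|i a].
  by rewrite ltr_pwDl // sumr_ge0 // => i _; exact: ltW.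
apply: le_trans (c_bound i a) _; rewrite ler_wpM2r ?normv_ge0 // (bigD1 i) //=.
have : 0 <= \sum_(j | j != i) c j by rewrite sumr_ge0 // => j _; exact: ltW.
lra.
Qed.

Lemma emono_locally_bounded al w : mono_rep Omega iota al !=set0 -> Omega w ->
  \forall z \near w, Omega z /\ normc (emono al z) < normc (emono al w) + 1.
Proof.
move=> [a a_al] Ow; case: hb => _ _ _ iota_diff _.
have iota_cont := differentiable_continuous (iota_diff a w Ow).
have near_Omega : \forall z \near w, Omega z by exact: open_nbhs_nbhs.
near=> z; have Oz : Omega z by near: z.
split=> //; rewrite -!a_al //.
have : normc (iota a w - iota a z) < 1.
  near: z; apply: (iota_cont [set u | normc (iota a w - u) < 1]).
  apply: filterS (nbhsx_ballx _ 1%:C%C _) => [u|]; last by rewrite ltcR.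
  by rewrite -ball_normE /= normr_normc ltcR.
have := le_normcD (iota a z - iota a w) (iota a w).
by rewrite subrK -opprB normcN; lra.
Unshelve. all: end_near.
Qed.

(* Along the line through w in the j-th direction, e_al behaves like s ^ al_j,
   which would blow up near w if al_j < 0. *)
Lemma mono_rep_exponent_ge0 al w j : mono_rep Omega iota al !=set0 -> Omega w ->
  w ord0 j = 0 -> 0 <= al ord0 j.
Proof.
move=> al_rep Ow wj0; rewrite leNgt; apply/negP => al_neg.
have al_le : al ord0 j <= -1 by rewrite -ltzD1 addNr.
have [r r0 near_w] := nbhs_rowP (emono_locally_bounded al_rep Ow).
pose B := normc (emono al w) + 1.
have B0 : 0 < B by rewrite /B ltr_wpDl ?normc_ge0.
pose v := \row_k (if w ord0 k == 0 then (r / 2)%:C%C else w ord0 k).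
have v_dist k : normc (w ord0 k - v ord0 k) < r.
  rewrite mxE; case: eqP => [->|_]; last by rewrite subrr normc0.
  by rewrite sub0r normcN normcR ger0_norm ?divr_ge0 ?ltW //; lra.
pose c0 := \prod_(k | k != j) normc (v ord0 k) ^ al ord0 k.
have c0_gt0 : 0 < c0.
  rewrite prodr_gt0 // => k _; rewrite exprz_gt0 // lt_def normc_ge0 andbT normc_eq0 mxE.
  by case: ifPn => // _; rewrite -normc_eq0 normcR normr_eq0 gt_eqF ?divr_gt0.
pose s := Num.min (r / 2) (Num.min 1 (c0 / B)).
have s0 : 0 < s by rewrite !lt_min ltr01 !divr_gt0.
have [sr s1 sc0] : [/\ s < r, s <= 1 & s <= c0 / B].
  split; rewrite /s ?ge_min ?lexx ?orbT //.
  by rewrite gt_min ltr_pdivrMr // ltr_pMr // ltr1n.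
pose z := \row_k (if k == j then s%:C%C else v ord0 k).
have [_] : Omega z /\ normc (emono al z) < B.
  apply: (near_w z) => k; rewrite /z mxE; case: eqP => [->|_]; last exact: v_dist.
  by rewrite wj0 sub0r normcN normcR gtr0_norm.
rewrite /z normc_emono_row_set normcR gtr0_norm // -/c0 -/B; apply/negP; rewrite -leNgt.
apply: (@le_trans _ _ (s^-1 * c0)); last by rewrite ler_pM2r // exprz_ge_inv.
by rewrite mulrC ler_pdivlMr // mulrC -ler_pdivlMr.
Qed.

Lemma near_perturbed_points (w : 'I_n -> R) : (forall j, 0 <= w j) ->
  Omega (\row_j (w j)%:C%C) ->
  exists rho eta : R, [/\ 1 < rho, 0 < eta & forall sg : {ffun 'I_n -> bool},
    Omega (\row_j (perturb (w j) rho eta (sg j))%:C%C)].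
Proof.
move=> w0 Ow; have [r r0 near_w] := nbhs_rowP (open_nbhs_nbhs (conj open_Omega Ow)).
pose W := 1 + \sum_j w j.
have W0 : 0 < W by rewrite ltr_pwDl ?sumr_ge0.
have wW j : w j < 2 * W.
  have : w j <= \sum_k w k by rewrite (bigD1 j) //= lerDl sumr_ge0.
  by have := w0 j; rewrite /W; lra.
have rho1 : 1 < 1 + r / (2 * W) by rewrite ltrDl divr_gt0 ?mulr_gt0.
exists (1 + r / (2 * W)), (r / 2); split=> [//||sg]; first by rewrite divr_gt0.
apply: near_w => j; rewrite !mxE -rmorphB normcR.
have [wj0|wjn0] := eqVneq (w j) 0.
  by rewrite /perturb wj0 eqxx sub0r normrN gtr0_norm ?divr_gt0 //; lra.
apply: le_lt_trans (perturb_dist _ _ (w0 j) (ltW rho1) wjn0) _.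
by rewrite addrAC subrr add0r mulrA ltr_pdivrMr ?mulr_gt0 // mulrC ltr_pM2l.
Qed.

Lemma local_geometric_bound m z0 : 0 < m -> reinhardt_power Omega m z0 ->
  exists C t : R, [/\ 0 <= C, 0 <= t, t < 1 &
  \forall z \near z0, forall al, mono_rep Omega iota al !=set0 ->
    normc (emono al z) / normv (monoA Omega iota al) `^ m <= C * t ^+ l1norm al].
Proof.
move=> m0 Oz0; pose a j := normc (z0 ord0 j); pose w j := a j `^ m^-1.
have w_ge0 j : 0 <= w j by exact: powR_ge0.
have w_eq0 j : (w j == 0) = (a j == 0) by rewrite powR_eq0 invr_eq0 (gt_eqF m0) andbT.
have wm j : w j `^ m = a j by rewrite -powRrM mulVf ?(gt_eqF m0) // powRr1 ?normc_ge0.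
have [rho [eta [rho1 eta0 Op]]] := near_perturbed_points w_ge0 Oz0.
have rho0 : 0 < rho := lt_trans ltr01 rho1.
have [c c0 eval_p] := eval_bounded Op.
pose D := rho `^ m.
have [t [t0 t1 tD]] := exists_lt1_mulr_gt1 (powR_gt1 m0 rho1 : 1 < D).
have P_true j : perturb (w j) rho eta true `^ m = if a j == 0 then eta `^ m else a j * D.
  by rewrite perturb_powR ?(ltW rho0) // w_eq0 wm.
have P_false j : w j != 0 -> perturb (w j) rho eta false `^ m = a j / D.
  by rewrite w_eq0 => an0; rewrite perturb_powR ?(ltW rho0) // w_eq0 (negbTE an0) wm.
exists (c `^ m), t; split; rewrite ?powR_ge0 ?(ltW t0) //.
apply: filterS (near_scaled_moduli z0 t0 tD (powR_gt0 m eta0)) => z z_near al al_rep.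
pose E := \prod_j perturb (w j) rho eta (0 <= al ord0 j) ^ al ord0 j.
have E_gt0 : 0 < E by rewrite prodr_gt0 // => j _; rewrite exprz_gt0 ?perturb_gt0.
have E_le : E <= c * normv (monoA Omega iota al).
  pose sg := [ffun j => 0 <= al ord0 j].
  have -> : E = normc (emono al (\row_j (perturb (w j) rho eta (sg j))%:C%C)).
    rewrite normc_emono; apply: eq_bigr => j _.
    by rewrite !mxE ffunE normcR gtr0_norm ?perturb_gt0.
  by rewrite -(monoA_emono al_rep (Op sg)) eval_p.
have N_gt0 : 0 < normv (monoA Omega iota al).
  by have := lt_le_trans E_gt0 E_le; rewrite pmulr_rgt0.
have ez_le : normc (emono al z) <= E `^ m * t ^+ l1norm al.
  apply: normc_emono_le_perturb => // [j al_j|j|j wj].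
  - apply: contraTneq al_j => wj0; rewrite -leNgt.
    apply: (mono_rep_exponent_ge0 al_rep Oz0); rewrite mxE.
    by change ((w j)%:C%C = 0); rewrite wj0.
  - by rewrite P_true; case: (z_near j).
  - by rewrite P_false //; case: (z_near j).
rewrite ler_pdivrMr ?powR_gt0 // mulrAC; apply: le_trans ez_le _.
rewrite ler_wpM2r ?exprn_ge0 ?(ltW t0) // -powRM ?(ltW c0) ?normv_ge0 //.
by rewrite ge0_ler_powR ?nnegrE ?(ltW m0) ?(ltW E_gt0) ?mulr_ge0 ?(ltW c0) ?normv_ge0.
Qed.

End HolomorphicBanachSpace.

Theorem lemma3p3 (R : realType) (n : nat) (Omega : set 'rV[(R[i])^o]_n)
  (A : completeNormedModType ((R[i])^o)) (iota : A -> 'rV[(R[i])^o]_n -> (R[i])^o) :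
  is_domain Omega -> reinhardt Omega -> holo_banach Omega iota ->
  forall m : R, 0 < m ->
  forall K : set 'rV[(R[i])^o]_n, compact K -> K `<=` reinhardt_power Omega m ->
  (\esum_(alpha in [set alpha : 'rV[int]_n | mono_rep Omega iota alpha !=set0])
     ereal_sup [set ((complex.Re `|emono alpha z|) / (complex.Re `|monoA Omega iota alpha|) `^ m)%:E
               | z in K] < +oo)%E.
Proof.
move=> [_ [open_Omega _]] _ hb m m0 K cK KOm.
pose I := {al : 'rV[int]_n | mono_rep Omega iota al !=set0}.
pose f (al : I) (z : 'rV[(R[i])^o]_n) :=
  normc (emono (sval al) z) / normv (monoA Omega iota (sval al)) `^ m.
case: (compact_geometric_bound (f := f) (d := l1norm \o sval) cK)
  => [x Kx|C [t [C0 t0 t1 bound]]].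
  have [C [t [C0 t0 t1 near_x]]] := local_geometric_bound hb open_Omega m0 (KOm x Kx).
  exists C, t; split=> //; apply: filterS near_x => z z_bound [al al_rep].
  exact: z_bound.
apply: le_lt_trans (esum_geometric_rows_lt_pinfty t0 t1 _ C0).
apply: le_esum => al al_rep; apply: ge_ereal_sup => _ [z Kz <-].
by rewrite lee_fin; exact: (bound z Kz (exist _ al al_rep)).
Qed.
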